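(* Let $a<b$ be real numbers and let $d\geq 2$ be an integer. Then there exists an alphabet $\mathcal{A}\subset\mathbb{R}$ with $|\mathcal{A}|=2^d$ such that for every $N$ and every $y\in[a,b]^{N\times N}$, the matrices $q,u\in\mathbb{R}^{N\times N}$ generated by the two-dimensional first-order $\Sigma\Delta$ recursion with alphabet $\mathcal{A}$ satisfy: (i) $\|u\|_{\max}\leq C$ with $C=\frac{b-a}{2(2^d-3)}$; (ii) $u_{i,j}=u_{i,j-1}+u_{i-1,j}-u_{i-1,j-1}+y_{i,j}-q_{i,j}$ for all $i,j$ (with $u_{i,0}=u_{0,j}=u_{0,0}=0$), i.e. $DuD^T=y-q$; (iii) each $q_{i,j}$ depends only on $\{y_{i',j'}: i'\leq i,\ j'\leq j\}$.
   Context: For a finite alphabet $\mathcal{A}\subset\mathbb{R}$, $Q_{\mathcal{A}}(z)$ denotes an element of $\mathcal{A}$ nearest to $z$. The two-dimensional first-order $\Sigma\Delta$ recursion: given $y\in\mathbb{R}^{N\times N}$, set $u_{i,0}=u_{0,j}=u_{0,0}=0$ and for $i,j\ge 1$ (in an order such that all indices $(i',j')$ with $i'\le i$, $j'\le j$, $(i',j')\neq(i,j)$ are computed first) define $q_{i,j}=Q_{\mathcal{A}}(u_{i,j-1}+u_{i-1,j}-u_{i-1,j-1}+y_{i,j})$ and $u_{i,j}=u_{i,j-1}+u_{i-1,j}-u_{i-1,j-1}+y_{i,j}-q_{i,j}$ (for the first row and column this reduces to the one-dimensional first-order scheme). $D$ is the $N\times N$ matrix with $1$ on the diagonal, $-1$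 on the subdiagonal and $0$ elsewhere. $\|u\|_{\max}=\max_{i,j}|u_{i,j}|$. *)

From HB Require Import structures.
From mathcomp Require Import all_boot all_order all_algebra.
From mathcomp Require Import reals.
Set Implicit Arguments. Unset Strict Implicit. Unset Printing Implicit Defensive.
Import Order.TTheory GRing.Theory Num.Theory.
Local Open Scope ring_scope.

(* Q : R -> R is a nearest-element quantizer onto the alphabet A
   (any tie-breaking rule is allowed). *)
Definition nearest_quantizer (R : realType) (A : seq R) (Q : R -> R) : Prop :=
  forall z : R, Q z \in A /\ (forall x, x \in A -> `|z - Q z| <= `|z - x|).

(* One row of the 2D first-order Sigma-Delta recursion (1-based indices,
   u_{i,0} = 0).  prev = row i-1 of u, yrow = row i of y. *)
Definition sd_row (R : realType) (Q : R -> R) (prev yrow : nat -> R) : nat -> R :=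
  fix f (j : nat) : R :=
    match j with
    | 0 => 0
    | j'.+1 => let v := f j' + prev j'.+1 - prev j' + yrow j'.+1 in v - Q v
    end.

(* u_{i,j} for all i, j (with u_{0,j} = u_{i,0} = 0), input y indexed from 1. *)
Fixpoint sd_u_nat (R : realType) (Q : R -> R) (y : nat -> nat -> R) (i : nat)
  : nat -> R :=
  match i with
  | 0 => fun _ => 0
  | i'.+1 => sd_row Q (sd_u_nat Q y i') (y i'.+1)
  end.

Definition sd_q_nat (R : realType) (Q : R -> R) (y : nat -> nat -> R) (i j : nat) : R :=
  match i, j with
  | i'.+1, j'.+1 =>
      Q (sd_u_nat Q y i j' + sd_u_nat Q y i' j - sd_u_nat Q y i' j' + y i j)
  | _, _ => 0
  end.

(* 1-based extension of an N x N matrix (zero outside 1..N). *)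
Definition mx_ext (R : realType) (N : nat) (y : 'M[R]_N) (i j : nat) : R :=
  match (insub i.-1 : option 'I_N), (insub j.-1 : option 'I_N) with
  | Some i', Some j' => if (0 < i)%N && (0 < j)%N then y i' j' else 0
  | _, _ => 0
  end.

(* The matrices u and q produced by the recursion; entry (i,j) of the
   MathComp matrix (0-based) is entry (i+1,j+1) of the paper. *)
Definition sd_u (R : realType) (N : nat) (Q : R -> R) (y : 'M[R]_N) : 'M[R]_N :=
  \matrix_(i < N, j < N) sd_u_nat Q (mx_ext y) i.+1 j.+1.

Definition sd_q (R : realType) (N : nat) (Q : R -> R) (y : 'M[R]_N) : 'M[R]_N :=
  \matrix_(i < N, j < N) sd_q_nat Q (mx_ext y) i.+1 j.+1.

Definition Dmx (R : realType) (N : nat) : 'M[R]_N :=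
  \matrix_(i < N, j < N)
    (if i == j then 1 else if (i : nat) == j.+1 then -1 else 0).

From HB Require Import structures.
From mathcomp Require Import all_boot all_order all_algebra.
From mathcomp Require Import reals.
From mathcomp Require Import ring lra.
Import Order.TTheory GRing.Theory Num.Theory.
Set Implicit Arguments.
Unset Strict Implicit.
Unset Printing Implicit Defensive.

Local Open Scope ring_scope.

(* Take as alphabet the 2^d-term arithmetic progression a - 2C + 2Ck with step
   2C; since 2C(2^d - 3) = b - a, its points are within C of every real in
   [a - 3C, b + 3C], so on that interval the nearest-letter quantizer errs by at
   most C.  If u_{i,j-1}, u_{i-1,j}, u_{i-1,j-1} are bounded by C and y_{i,j} lies
   in [a, b], the quantizer input u_{i,j-1} + u_{i-1,j} - u_{i-1,j-1} + y_{i,j}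
   lies in that interval, and u_{i,j} is exactly the quantization error: the
   bound propagates by induction on (i, j).  Since D is a backward difference,
   D u D^T = y - q is the recursion read entrywise, and causality holds because
   the recursion at (i, j) only looks at indices below (i, j). *)

Section ArithmeticAlphabet.
Variable R : realType.

Definition arith_seq (c h : R) (n : nat) : seq R :=
  [seq c + h * k%:R | k <- iota 0 n].

Lemma size_arith_seq c h n : size (arith_seq c h n) = n.
Proof. by rewrite size_map size_iota. Qed.

Lemma arith_seq_uniq c h n : h != 0 -> uniq (arith_seq c h n).
Proof.
move=> h0; rewrite map_inj_uniq ?iota_uniq // => k1 k2 /addrI /(mulfI h0).
by move/eqP; rewrite eqr_nat => /eqP.
Qed.

Lemma mem_arith_seq c h n k : (k < n)%N -> c + h * k%:R \in arith_seq c h n.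
Proof. by move=> kn; apply: map_f; rewrite mem_iota. Qed.

Lemma arith_seq_cover (c C v : R) n : 0 <= C ->
  c - C <= v <= c + C + 2 * C * n%:R ->
  exists2 k, (k <= n)%N & `|v - (c + 2 * C * k%:R)| <= C.
Proof.
move=> C0; elim: n => [|n IH] /andP[vlo vhi].
  by exists 0%N; rewrite // ler_norml; apply/andP; move: vhi; rewrite mulr0; split; lra.
case: (lerP v (c + C + 2 * C * n%:R)) => vn.
  by have [k kn vk] := IH (introT andP (conj vlo vn)); exists k; rewrite ?leqW.
by exists n.+1; rewrite // ler_norml; apply/andP; move: vhi; rewrite -natr1; split; lra.
Qed.

Lemma arith_seq_quantizer_err (c C v : R) n (Q : R -> R) : 0 <= C ->
  nearest_quantizer (arith_seq c (2 * C) n.+1) Q ->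
  c - C <= v <= c + C + 2 * C * n%:R -> `|v - Q v| <= C.
Proof.
move=> C0 HQ /(arith_seq_cover C0) [k kn vk].
have [_ Qmin] := HQ v.
exact: le_trans (Qmin _ (mem_arith_seq _ _ (kn : (k < n.+1)%N))) vk.
Qed.

End ArithmeticAlphabet.

Section Recursion.
Variables (R : realType) (Q : R -> R).
Implicit Types Y : nat -> nat -> R.

Lemma sd_u_nat0 Y i : sd_u_nat Q Y i 0 = 0.
Proof. by case: i. Qed.

Lemma sd_u_natSS Y i j :
  let v := sd_u_nat Q Y i.+1 j + sd_u_nat Q Y i j.+1 - sd_u_nat Q Y i j + Y i.+1 j.+1 in
  sd_u_nat Q Y i.+1 j.+1 = v - Q v.
Proof. by []. Qed.

Lemma sd_q_natSS Y i j :
  sd_q_nat Q Y i.+1 j.+1 =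
  Q (sd_u_nat Q Y i.+1 j + sd_u_nat Q Y i j.+1 - sd_u_nat Q Y i j + Y i.+1 j.+1).
Proof. by []. Qed.

Lemma sd_u_nat_bound Y (a b C : R) N : 0 <= C ->
  (forall v, a - 3 * C <= v <= b + 3 * C -> `|v - Q v| <= C) ->
  (forall i j, (0 < i <= N)%N -> (0 < j <= N)%N -> a <= Y i j <= b) ->
  forall i j, (i <= N)%N -> (j <= N)%N -> `|sd_u_nat Q Y i j| <= C.
Proof.
move=> C0 Qerr Yab; elim=> [|i IHi] j iN jN; first by rewrite normr0.
elim: j jN => [|j IHj] jN; first by rewrite sd_u_nat0 normr0.
rewrite sd_u_natSS; apply: Qerr.
have := IHj (ltnW jN); have := IHi j.+1 (ltnW iN) jN; have := IHi j (ltnW iN) (ltnW jN).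
have /andP[] := Yab i.+1 j.+1 iN jN.
rewrite !ler_norml => ? ? /andP[? ?] /andP[? ?] /andP[? ?].
apply/andP; split; lra.
Qed.

Definition agree_upto Y (Y' : nat -> nat -> R) i j :=
  forall i' j', (i' <= i)%N -> (j' <= j)%N -> Y' i' j' = Y i' j'.

Lemma agree_uptoW Y (Y' : nat -> nat -> R) i j i' j' : (i' <= i)%N -> (j' <= j)%N ->
  agree_upto Y Y' i j -> agree_upto Y Y' i' j'.
Proof.
by move=> ii jj H i'' j'' ii' jj'; apply: H; [exact: leq_trans ii | exact: leq_trans jj].
Qed.

Lemma sd_u_nat_causal Y (Y' : nat -> nat -> R) i j : agree_upto Y Y' i j ->
  sd_u_nat Q Y' i j = sd_u_nat Q Y i j.
Proof.
elim: i j => [|i IHi] j // H; elim: j H => [|j IHj] H; first by rewrite !sd_u_nat0.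
have Hi j' : (j' <= j.+1)%N -> agree_upto Y Y' i j'.
  by move=> jj; exact: agree_uptoW (leqnSn i) jj H.
rewrite !sd_u_natSS (IHj (agree_uptoW (leqnn _) (leqnSn j) H)).
by rewrite (IHi _ (Hi _ (leqnn _))) (IHi _ (Hi _ (leqnSn j))) H.
Qed.

Lemma sd_q_nat_causal Y (Y' : nat -> nat -> R) i j : agree_upto Y Y' i j ->
  sd_q_nat Q Y' i j = sd_q_nat Q Y i j.
Proof.
case: i j => [|i] [|j] // H; rewrite !sd_q_natSS H //.
by congr (Q (_ + _ - _ + _)); apply: sd_u_nat_causal; apply: agree_uptoW H.
Qed.

End Recursion.

Section MatrixEncoding.
Variables (R : realType) (N : nat).
Implicit Types y : 'M[R]_N.

Lemma mx_extS y (i j : 'I_N) : mx_ext y i.+1 j.+1 = y i j.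
Proof. by rewrite /mx_ext /= !valK. Qed.

Lemma mx_ext_bounded y (a b : R) : (forall i j, a <= y i j <= b) ->
  forall i j, (0 < i <= N)%N -> (0 < j <= N)%N -> a <= mx_ext y i j <= b.
Proof.
by move=> yab [|i] [|j] // iN jN; rewrite (mx_extS y (Ordinal iN) (Ordinal jN)).
Qed.

Lemma mx_ext_agree_upto y y' (i j : 'I_N) :
  (forall i' j' : 'I_N, (i' <= i)%N -> (j' <= j)%N -> y' i' j' = y i' j') ->
  agree_upto (mx_ext y) (mx_ext y') i.+1 j.+1.
Proof.
move=> yy' [|i'] [|j'] ii jj; rewrite /mx_ext ?andbF //=.
have iN : (i' < N)%N := leq_trans ii (ltn_ord i).
have jN : (j' < N)%N := leq_trans jj (ltn_ord j).
by rewrite !insubT /=; apply: yy'.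
Qed.

End MatrixEncoding.

Section BackwardDifference.
Variables (R : realType) (N : nat).

Lemma DmxE (i k : 'I_N) : Dmx R N i k = (i == k)%:R - (i == k.+1 :> nat)%:R.
Proof.
rewrite mxE; have [-> | _] := eqVneq i k.
  by rewrite (ltn_eqF (ltnSn k)) subr0.
by case: eqP; rewrite ?subr0 ?sub0r.
Qed.

Lemma sum_Dmx_mul (g : nat -> R) (i : 'I_N) : g 0%N = 0 ->
  \sum_(k < N) Dmx R N i k * g k.+1 = g i.+1 - g i.
Proof.
move=> g0; under eq_bigr do rewrite DmxE mulrBl.
rewrite sumrB (bigD1 i) //= eqxx mul1r big1 ?addr0 => [|k ki]; last first.
  by rewrite eq_sym (negbTE ki) mul0r.
congr (_ - _); case: i => [[|i] iN] /=.
  by rewrite big1 // => k _; rewrite mul0r.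
rewrite (bigD1 (Ordinal (ltnW iN))) //= eqxx mul1r big1 ?addr0 // => k.
by rewrite -val_eqE /= eqSS eq_sym => /negbTE ->; rewrite mul0r.
Qed.

End BackwardDifference.

Lemma sd_noise_shaping (R : realType) N (Q : R -> R) (y : 'M[R]_N) :
  Dmx R N *m sd_u Q y *m (Dmx R N)^T = y - sd_q Q y.
Proof.
apply/matrixP => i j; set F := sd_u_nat Q (mx_ext y).
have DuE k : (Dmx R N *m sd_u Q y) i k = F i.+1 k.+1 - F i k.+1.
  rewrite mxE -(sum_Dmx_mul (g := fun l => F l k.+1)) //.
  by apply: eq_bigr => l _; rewrite [sd_u _ _ _ _]mxE.
rewrite mxE; under eq_bigr do rewrite DuE mxE mulrC.
rewrite (sum_Dmx_mul (g := fun k => F i.+1 k - F i k)); last by rewrite /F !sd_u_nat0 subr0.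
by rewrite !mxE /F sd_u_natSS sd_q_natSS mx_extS; ring.
Qed.

Section Alphabet.
Variables (R : realType) (a b : R) (K : nat).
Hypotheses (ab : a < b) (K4 : (4 <= K)%N).
Local Notation C := ((b - a) / (2 * (K%:R - 3))).

Lemma ltr3K : 3 < K%:R :> R.
Proof. by rewrite (ltr_nat R 3 K). Qed.

Lemma sd_bound_gt0 : 0 < C.
Proof. by rewrite divr_gt0 ?subr_gt0 // mulr_gt0 // subr_gt0 ltr3K. Qed.

Lemma sd_alphabet_err (Q : R -> R) :
  nearest_quantizer (arith_seq (a - 2 * C) (2 * C) K) Q ->
  forall v, a - 3 * C <= v <= b + 3 * C -> `|v - Q v| <= C.
Proof.
have CK : 2 * C * (K%:R - 3) = b - a by field; rewrite gt_eqF // subr_gt0 ltr3K.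
move: C (ltW sd_bound_gt0) CK => r r0 rK.
have [K' KE] : exists K', K = K'.+1 by exists K.-1; rewrite prednK // (leq_trans _ K4).
rewrite KE -natr1 in rK *; move=> HQ v /andP[vlo vhi].
apply: (arith_seq_quantizer_err r0 HQ); apply/andP; split; lra.
Qed.

End Alphabet.

Theorem proposition1 (R : realType) (a b : R) (d : nat) :
  a < b -> (2 <= d)%N ->
  exists A : seq R,
    uniq A /\ size A = (2 ^ d)%N /\
    forall Q : R -> R, nearest_quantizer A Q ->
    forall (N : nat) (y : 'M[R]_N),
      (forall i j, a <= y i j <= b) ->
      [/\ (forall i j, `|sd_u Q y i j| <= (b - a) / (2 * ((2 ^ d)%:R - 3))),
          Dmx R N *m sd_u Q y *m (Dmx R N)^T = y - sd_q Q y
        & forall (i j : 'I_N) (y' : 'M[R]_N),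
            (forall (i' j' : 'I_N), (i' <= i)%N -> (j' <= j)%N -> y' i' j' = y i' j') ->
            sd_q Q y' i j = sd_q Q y i j].
Proof.
move=> ab d2; have K4 : (4 <= 2 ^ d)%N by rewrite -[4%N]/(2 ^ 2)%N leq_exp2l.
have C0 := sd_bound_gt0 ab K4; set C := (b - a) / _ in C0 *.
exists (arith_seq (a - 2 * C) (2 * C) (2 ^ d)).
split; first by rewrite arith_seq_uniq // mulf_neq0 // gt_eqF.
split=> [|Q HQ N y yab]; first exact: size_arith_seq.
split=> [i j||i j y' yy'].
- rewrite mxE; apply: (sd_u_nat_bound (ltW C0) (sd_alphabet_err ab K4 HQ)) => //.
  exact: mx_ext_bounded.
- exact: sd_noise_shaping.
- by rewrite !mxE; apply/sd_q_nat_causal/mx_ext_agree_upto.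
Qed.
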